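(* Let $n>5$ be prime and let $\Gamma_n$ be a finite multiset of elements of $\mathbb{Z}_n$ such that for every $v\in\mathbb{Z}_n$, $v\Gamma_n=\Gamma_n$ implies $v\in\{-1,0,1\}$. Let $\gamma_n$ be the uniform distribution over $\Gamma_n$. Then the random walk on $\mathbb{Z}_n$ with step distribution $\gamma_n$ is either symmetric (i.e. $\gamma_n(k)=\gamma_n(-k)$ for all $k$) or reconstructive.
   Context: For $v\in\mathbb{Z}_n$, $v\Gamma_n$ is the multiset obtained by multiplying each element of $\Gamma_n$ by $v$ in $\mathbb{Z}_n$. The uniform distribution over $\Gamma_n$ assigns $k$ probability (multiplicity of $k$)/$|\Gamma_n|$. The random walk has $v(1)$ uniform on $\mathbb{Z}_n$ and independent steps distributed by $\gamma_n$. It is reconstructive if, for any two labelings $f_1,f_2:\mathbb{Z}_n\to\{0,1\}$, the distributions of $\{f_1(v(t))\}_{t\ge1}$ and $\{f_2(v(t))\}_{t\ge1}$ coincide only if there is $\ell$ with $f_1(k)=f_2(k+\ell)$ for all $k$. *)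

From mathcomp Require Import all_boot all_order all_algebra.
Set Implicit Arguments. Unset Strict Implicit. Unset Printing Implicit Defensive.
Import GRing.Theory Num.Theory.
Local Open Scope ring_scope.

(* A finite multiset Gamma of elements of Z_n is represented by a sequence
   (multiplicities = number of occurrences); multiset equality is perm_eq. *)

Definition mset_scale (n : nat) (v : 'Z_n) (G : seq 'Z_n) : seq 'Z_n :=
  map (fun x => v * x) G.

Definition gamma (n : nat) (G : seq 'Z_n) (k : 'Z_n) : rat :=
  (count_mem k G)%:R / (size G)%:R.

Definition symmetric_step (n : nat) (G : seq 'Z_n) : Prop :=
  forall k : 'Z_n, gamma G k = gamma G (- k).

(* Probability that, starting from current position x, the next |w| labels
   f(v(t+1)), ..., f(v(t+|w|)) equal w, with i.i.d. steps uniform on Gamma. *)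
Fixpoint path_prob (n : nat) (G : seq 'Z_n) (f : 'Z_n -> bool) (x : 'Z_n)
    (w : seq bool) : rat :=
  match w with
  | [::] => 1
  | b :: w' => \sum_(i < size G)
      ((size G)%:R^-1 * (f (x + nth 0 G i) == b)%:R
         * path_prob G f (x + nth 0 G i) w')
  end.

(* Finite-dimensional law of the label process {f(v(t))}_{t>=1}:
   P(f(v(1)) = w_1, ..., f(v(T)) = w_T), with v(1) uniform on Z_n. *)
Definition label_prob (n : nat) (G : seq 'Z_n) (f : 'Z_n -> bool)
    (w : seq bool) : rat :=
  match w with
  | [::] => 1
  | b :: w' => \sum_(x : 'Z_n)
      ((#|'Z_n|)%:R^-1 * (f x == b)%:R * path_prob G f x w')
  end.

(* Two labelings give the same distribution of the label sequence
   (equality of all finite-dimensional distributions, which determine the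
   law on {0,1}^N with the product sigma-algebra). *)
Definition same_label_law (n : nat) (G : seq 'Z_n) (f1 f2 : 'Z_n -> bool) : Prop :=
  forall w : seq bool, label_prob G f1 w = label_prob G f2 w.

Definition reconstructive (n : nat) (G : seq 'Z_n) : Prop :=
  forall f1 f2 : 'Z_n -> bool, same_label_law G f1 f2 ->
    exists l : 'Z_n, forall k : 'Z_n, f1 k = f2 (k + l).

(* The law of the label sequence determines, for all s and t, the
   three-point correlation E[F(v(1)) F(v(s+2)) F(v(s+t+3))] of the indicator F of the
   labeling.  Diagonalising the walk with the characters of Z_n, this correlation equals
   (1/n^2) sum_(m,k) B(m-k,k) lambda_m^(s+1) lambda_k^(t+1), where
   lambda_k = (1/|Gamma|) sum_(g in Gamma) zeta^(-gk) are the eigenvalues of the walk and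
   B(j,k) = F^(j) F^(k) F^(-j-k) is the bispectrum of F.  Because n is prime, the only
   rational relation among the powers of zeta is 1 + zeta + ... + zeta^(n-1) = 0, so
   lambda_a = lambda_b forces a Gamma = b Gamma; the hypothesis on Gamma, together with
   asymmetry, then makes the lambda_k distinct and nonzero, and a Vandermonde argument
   recovers B from the label law.  For the same reason F^ never vanishes when the labeling
   is nonconstant, so the quotient of the Fourier transforms of two labelings with the same
   bispectrum is a character of Z_n: the labelings differ by a shift. *)

From mathcomp Require Import all_boot all_order all_algebra all_field.
From mathcomp Require Import ring.
Import GRing.Theory Num.Theory.
Set Implicit Arguments. Unset Strict Implicit. Unset Printing Implicit Defensive.
Local Open Scope ring_scope.

(** * Arithmetic and multisets in Z_n *)

Lemma Zp_natr_eq0 n k : (1 < n)%N -> (k%:R == 0 :> 'Z_n) = (n %| k)%N.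
Proof. by move=> n_gt1; rewrite -(inj_eq val_inj) /= Zp_nat /= Zp_cast. Qed.

Lemma coprime_Zp_prime n (a : 'Z_n) : prime n -> a != 0 -> coprime n a.
Proof.
move=> n_prime a_neq0; rewrite prime_coprime //; apply/negP => /dvdn_leq.
have a_gt0 : (0 < a)%N by rewrite lt0n; apply: contra a_neq0 => /eqP a0; apply/eqP/val_inj.
by move=> /(_ a_gt0); rewrite leqNgt -[X in (_ < X)%N](Zp_cast (prime_gt1 n_prime)) ltn_ord.
Qed.

Lemma Zp_unit_prime n (a : 'Z_n) : prime n -> a != 0 -> a \is a GRing.unit.
Proof.
move=> n_prime a_neq0.
by rewrite -(natr_Zp a) unitZpE ?prime_gt1 ?coprime_Zp_prime.
Qed.

Lemma sum_count_mem (T : finType) (V : nmodType) (s : seq T) (F : T -> V) :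
  \sum_(g <- s) F g = \sum_x F x *+ count_mem x s.
Proof.
elim: s => [|a s IH]; first by rewrite big_nil big1.
rewrite big_cons IH (bigD1 a) //= [in RHS](bigD1 a) //= eqxx mulrS addrA; congr (_ + _).
by apply: eq_bigr => x /negbTE xa; rewrite eq_sym xa.
Qed.

Lemma mset_scaleA n (a b : 'Z_n) s : mset_scale a (mset_scale b s) = mset_scale (a * b) s.
Proof. by rewrite /mset_scale -map_comp; apply: eq_map => x /=; rewrite mulrA. Qed.

Lemma perm_mset_scale_unit n (u : 'Z_n) s1 s2 : u \is a GRing.unit ->
  perm_eq (mset_scale u s1) (mset_scale u s2) = perm_eq s1 s2.
Proof.
move=> u_unit; apply/idP/idP; last exact: perm_map.
exact/perm_map_inj/mulrI.
Qed.

Lemma perm_mset_scale_uniform n (u : 'Z_n) s : u \is a GRing.unit ->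
  (forall x, count_mem x s = count_mem 0 s) -> perm_eq (mset_scale u s) s.
Proof.
move=> u_unit uniform; apply/allP => x _; apply/eqP.
rewrite count_map (eq_count (a2 := pred1 (u^-1 * x))) => [|y /=]; last first.
  by rewrite (can2_eq (mulKr u_unit) (mulVKr u_unit)).
by rewrite !uniform.
Qed.

(** * Statistics of the label process *)

Fixpoint words (m : nat) : seq (seq bool) :=
  if m is m'.+1 then map (cons true) (words m') ++ map (cons false) (words m')
  else [:: [::]].

Lemma big_words_cons (R : nmodType) m (F : seq bool -> R) :
  \sum_(w <- words m.+1) F w = \sum_(w <- words m) (F (true :: w) + F (false :: w)).
Proof.
have -> : words m.+1 = map (cons true) (words m) ++ map (cons false) (words m) by [].
by rewrite big_cat !big_map big_split.
Qed.

Section Markov.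
Variables (R : fieldType) (n : nat) (G : seq 'Z_n).

Definition markov (u : 'Z_n -> R) (x : 'Z_n) : R :=
  \sum_(i < size G) (size G)%:R^-1 * u (x + nth 0 G i).

Lemma eq_markov u v : u =1 v -> markov u =1 markov v.
Proof. by move=> uv x; apply: eq_bigr => i _; rewrite uv. Qed.

Lemma eq_iter_markov k u v : u =1 v -> iter k markov u =1 iter k markov v.
Proof. by move=> uv; elim: k => [|k IH] //= x; apply: eq_markov. Qed.

End Markov.

Section LabelStatistics.
Variables (R : numFieldType) (n : nat) (G : seq 'Z_n) (f : 'Z_n -> bool).

(* [path_stat hs x] is E[h_1(f(v(t+1))) * ... * h_m(f(v(t+m)))] given v(t) = x;
   [path_prob] is the case where each h_i is the indicator of w_i. *)
Fixpoint path_stat (hs : seq (bool -> R)) (x : 'Z_n) : R :=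
  if hs is h :: hs' then markov G (fun y => h (f y) * path_stat hs' y) x else 1.

Definition label_stat (hs : seq (bool -> R)) : R :=
  if hs is h :: hs' then \sum_x #|'Z_n|%:R^-1 * (h (f x) * path_stat hs' x) else 1.

Fixpoint test_weight (hs : seq (bool -> R)) (w : seq bool) : R :=
  if (hs, w) is (h :: hs', b :: w') then h b * test_weight hs' w' else 1.

Lemma path_statE hs x :
  path_stat hs x = \sum_(w <- words (size hs)) test_weight hs w * ratr (path_prob G f x w).
Proof.
elim: hs x => [|h hs IH] x /=; first by rewrite big_seq1 rmorph1 mulr1.
rewrite big_words_cons /markov /=.
under [RHS]eq_bigr => w _ do rewrite !rmorph_sum !mulr_sumr -big_split.
rewrite exchange_big; apply: eq_bigr => i _ /=.
rewrite IH !mulr_sumr; apply: eq_bigr => w _.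
rewrite !rmorphM fmorphV !rmorph_nat.
by case: (f _); rewrite /= ?mulr0 ?mul0r ?mulr1 ?addr0 ?add0r; ring.
Qed.

Lemma label_statE hs :
  label_stat hs = \sum_(w <- words (size hs)) test_weight hs w * ratr (label_prob G f w).
Proof.
case: hs => [|h hs] /=; first by rewrite big_seq1 rmorph1 mulr1.
rewrite big_words_cons /=.
under [RHS]eq_bigr => w _ do rewrite !rmorph_sum !mulr_sumr -big_split.
rewrite exchange_big; apply: eq_bigr => x _ /=.
rewrite path_statE !mulr_sumr; apply: eq_bigr => w _.
rewrite !rmorphM fmorphV !rmorph_nat.
by case: (f _); rewrite /= ?mulr0 ?mul0r ?mulr1 ?addr0 ?add0r; ring.
Qed.

Definition hit : bool -> R := fun b => b%:R.
Definition skip : bool -> R := fun _ => 1.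

Lemma path_stat_skip s h hs :
  path_stat (nseq s skip ++ h :: hs) =1
  iter s.+1 (markov G) (fun y => h (f y) * path_stat hs y).
Proof. by elim: s => [|s IH] x //=; apply: eq_markov => y; rewrite mul1r IH. Qed.

End LabelStatistics.

(* [#|Z_n|^-1 * triple_corr G F s t] is E[F(v(1)) F(v(s+2)) F(v(s+t+3))]. *)
Definition triple_corr (R : fieldType) n (G : seq 'Z_n) (F : 'Z_n -> R) (s t : nat) : R :=
  \sum_x F x * iter s.+1 (markov G) (fun y => F y * iter t.+1 (markov G) F y) x.

Lemma label_stat_triple (R : numFieldType) n (G : seq 'Z_n) f s t :
  label_stat G f (hit R :: nseq s (skip R) ++ hit R :: nseq t (skip R) ++ [:: hit R]) =
  #|'Z_n|%:R^-1 * triple_corr G (fun y => (f y)%:R) s t.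
Proof.
rewrite /= /triple_corr mulr_sumr; apply: eq_bigr => x _; congr (_ * (_ * _)).
etransitivity; first exact: path_stat_skip.
apply: eq_iter_markov => y; congr (_ * _).
etransitivity; first exact: path_stat_skip.
by apply: eq_iter_markov => v; rewrite /= mulr1.
Qed.

Lemma same_law_triple_corr n (G : seq 'Z_n) f1 f2 s t :
  same_label_law G f1 f2 ->
  triple_corr G (fun y => (f1 y)%:R : algC) s t = triple_corr G (fun y => (f2 y)%:R) s t.
Proof.
move=> law; apply: (mulfI (x := #|'Z_n|%:R^-1)).
  by rewrite invr_eq0 pnatr_eq0 -lt0n; apply/card_gt0P; exists 0.
by rewrite -!label_stat_triple !label_statE; apply: eq_bigr => w _; rewrite law.
Qed.

(** * Fourier analysis on Z_n *)

Section Fourier.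
Variables (R : fieldType) (n : nat) (z : R) (G : seq 'Z_n).
Hypotheses (n_gt1 : (1 < n)%N) (z_prim : n.-primitive_root z) (n_neq0 : n%:R != 0 :> R).

Definition zpow (a : 'Z_n) : R := z ^+ a.

Let z_primZ : (Zp_trunc n).+2.-primitive_root z.
Proof. by rewrite Zp_cast. Qed.

Lemma zpowD a b : zpow (a + b) = zpow a * zpow b.
Proof. by rewrite /zpow /= (prim_expr_mod z_primZ) exprD. Qed.

Lemma zpow0 : zpow 0 = 1.
Proof. exact: expr0. Qed.

Lemma zpowM a (k : 'Z_n) : zpow (a * k) = zpow a ^+ k.
Proof. by rewrite /zpow /= (prim_expr_mod z_primZ) exprM. Qed.

Lemma zpow_nat m : zpow m%:R = z ^+ m.
Proof. by rewrite /zpow Zp_nat /= (prim_expr_mod z_primZ). Qed.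

Lemma sum_zpow (a : 'Z_n) : \sum_k zpow (a * k) = if a == 0 then n%:R else 0.
Proof.
under eq_bigr => k _ do rewrite zpowM.
have [->|a0] := eqVneq a 0.
  by rewrite zpow0; under eq_bigr => k _ do rewrite expr1n; rewrite sumr_const card_ord Zp_cast.
have za1 : zpow a != 1.
  have a_gt0 : (0 < a)%N by rewrite lt0n; apply: contra a0 => /eqP a0; apply/eqP/val_inj.
  rewrite /zpow -(prim_order_dvd z_primZ); apply/negP => /(dvdn_leq a_gt0).
  by rewrite leqNgt ltn_ord.
have := subrX1 (zpow a) (Zp_trunc n).+2.
rewrite /zpow -exprM mulnC exprM (prim_expr_order z_primZ) expr1n subrr => /esym/eqP.
by rewrite mulf_eq0 subr_eq0 (negbTE za1) => /eqP.
Qed.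

Definition hat (F : 'Z_n -> R) (k : 'Z_n) : R := \sum_y F y * zpow (y * k).

Lemma fourier_inv F x : F x = \sum_k n%:R^-1 * hat F k * zpow (- (x * k)).
Proof.
transitivity (n%:R^-1 * \sum_y F y * \sum_k zpow ((y - x) * k)).
  under eq_bigr => y _ do rewrite sum_zpow subr_eq0.
  rewrite (bigD1 x) //= eqxx big1 => [|y /negbTE ->]; last by rewrite mulr0.
  by rewrite addr0 mulrCA mulVf // mulr1.
rewrite mulr_sumr; under eq_bigr => y _ do rewrite !mulr_sumr.
rewrite exchange_big /=; apply: eq_bigr => k _.
rewrite /hat mulr_sumr mulr_suml; apply: eq_bigr => y _.
by rewrite mulrBl zpowD -mulNr; ring.
Qed.

Lemma fourier_shift F1 F2 l :
  (forall k, hat F1 k = zpow (l * k) * hat F2 k) -> forall x, F1 x = F2 (x - l).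
Proof.
move=> hat_shift x; rewrite (fourier_inv F1) (fourier_inv F2); apply: eq_bigr => k _.
by rewrite hat_shift mulrBl opprB zpowD; ring.
Qed.

Lemma Zp_character_zpow (r : 'Z_n -> R) :
  r 0 = 1 -> (forall j k, r (j + k) = r j * r k) -> exists l, forall k, r k = zpow (l * k).
Proof.
move=> r0 rD; have r_nat m : r m%:R = r 1 ^+ m.
  by elim: m => [|m IH]; rewrite ?r0 // -natr1 rD IH exprSr.
have /(prim_rootP z_prim)[i r1] : r 1 ^+ n = 1.
  by rewrite -r_nat (eqP (_ : n%:R == 0 :> 'Z_n)) // Zp_natr_eq0.
by exists i%:R => k; rewrite zpowM zpow_nat -r1 -r_nat natr_Zp.
Qed.

Definition eigval (k : 'Z_n) : R := (size G)%:R^-1 * \sum_(g <- G) zpow (- (g * k)).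

Lemma markov_lin (I : finType) (c : I -> R) (phi : I -> 'Z_n) :
  markov G (fun y => \sum_i c i * zpow (- (y * phi i))) =1
  fun x => \sum_i c i * eigval (phi i) * zpow (- (x * phi i)).
Proof.
move=> x; rewrite /markov; under eq_bigr => j _ do rewrite mulr_sumr.
rewrite exchange_big; apply: eq_bigr => i _ /=.
rewrite /eigval (big_nth 0) big_mkord !mulr_sumr mulr_suml; apply: eq_bigr => j _.
by rewrite mulrDl opprD zpowD; ring.
Qed.

Lemma iter_markov_lin k (I : finType) (c : I -> R) (phi : I -> 'Z_n) :
  iter k (markov G) (fun y => \sum_i c i * zpow (- (y * phi i))) =1
  fun x => \sum_i c i * eigval (phi i) ^+ k * zpow (- (x * phi i)).
Proof.
elim: k => [|k IH] x /=; first by apply: eq_bigr => i _; rewrite mulr1.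
rewrite (eq_markov G IH) (markov_lin (fun i => c i * eigval (phi i) ^+ k)).
by apply: eq_bigr => i _; rewrite exprSr mulrA.
Qed.

Definition bispec (F : 'Z_n -> R) (j k : 'Z_n) : R := hat F j * hat F k * hat F (- (j + k)).

Lemma triple_corr_fourier F s t :
  triple_corr G F s t = (n%:R ^+ 2)^-1 *
    \sum_(p : 'Z_n * 'Z_n) bispec F (p.1 - p.2) p.2 * eigval p.1 ^+ s.+1 * eigval p.2 ^+ t.+1.
Proof.
pose a k := n%:R^-1 * hat F k.
have Fa : F =1 fun y => \sum_k a k * zpow (- (y * k)) by move=> y; rewrite {1}(fourier_inv F y).
have inner w : F w * iter t.+1 (markov G) F w =
    \sum_(p : 'Z_n * 'Z_n) a p.1 * a p.2 * eigval p.2 ^+ t.+1 * zpow (- (w * (p.1 + p.2))).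
  rewrite (eq_iter_markov G _ Fa) (iter_markov_lin _ a id) Fa mulr_suml.
  under eq_bigr => j _ do rewrite mulr_sumr.
  rewrite pair_bigA; apply: eq_bigr => [[j k]] _ /=.
  by rewrite mulrDr opprD zpowD; ring.
rewrite /triple_corr (eq_bigr _ (fun x _ => congr1 _ (eq_iter_markov G _ inner x))).
under eq_bigr => x _ do rewrite (iter_markov_lin _ _ (fun p => p.1 + p.2)) mulr_sumr.
rewrite exchange_big mulr_sumr (reindex_inj (h := fun p => (p.1 - p.2, p.2))) /=; last first.
  by apply: (can_inj (g := fun p => (p.1 + p.2, p.2))) => -[j k]; rewrite subrK.
apply: eq_big => // -[m k] _ /=; rewrite !subrK.
transitivity (hat F (- m) * (a (m - k) * a k * eigval k ^+ t.+1 * eigval m ^+ s.+1)).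
  by rewrite /hat mulr_suml; apply: eq_bigr => x _; rewrite mulrN; ring.
by rewrite /bispec /a subrK -exprVn; ring.
Qed.

End Fourier.

Section PowerSums.
Variables (R : idomainType) (I : finType) (l : I -> R).
Hypotheses (l_inj : injective l) (l_neq0 : forall i, l i != 0).

(* Pair the power sums with the coefficients of X * \prod_(j != i0) (X - l j), which
   vanishes at every node except l i0. *)
Lemma power_sums_eq0 (c : I -> R) :
  (forall s, \sum_i c i * l i ^+ s.+1 = 0) -> forall i, c i = 0.
Proof.
move=> sums0 i0; pose Q : {poly R} := 'X * \prod_(j | j != i0) ('X - (l j)%:P).
have Ql i : Q.[l i] = l i * \prod_(j | j != i0) (l i - l j).
  rewrite hornerM hornerX horner_prod; congr (_ * _).
  by apply: eq_bigr => j _; rewrite hornerXsubC.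
have : \sum_i c i * Q.[l i] = 0.
  under eq_bigr => i _ do rewrite horner_coef mulr_sumr.
  rewrite exchange_big big1 // => -[[|k] _] _ /=.
    by apply: big1 => i _; rewrite coefXM mul0r mulr0.
  transitivity (Q`_k.+1 * \sum_i c i * l i ^+ k.+1); last by rewrite sums0 mulr0.
  by rewrite mulr_sumr; apply: eq_bigr => i _; rewrite mulrCA.
rewrite (bigD1 i0) //= big1 => [|i i_neq]; last by rewrite Ql (bigD1 i) //= subrr mul0r !mulr0.
rewrite addr0 Ql => /eqP; rewrite !mulf_eq0 (negbTE (l_neq0 i0)) /= => /orP[/eqP //|].
rewrite prodf_seq_eq0 => /hasP[j _] /andP[j_neq].
by rewrite subr_eq0 => /eqP/l_inj ji0; rewrite ji0 eqxx in j_neq.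
Qed.

Lemma power_sums2_eq0 (c : I * I -> R) :
  (forall s t, \sum_p c p * l p.1 ^+ s.+1 * l p.2 ^+ t.+1 = 0) -> forall p, c p = 0.
Proof.
move=> sums0 [i j]; move: j; apply: power_sums_eq0 => t.
move: i; apply: power_sums_eq0 => s.
rewrite -[RHS](sums0 s t); under eq_bigr => i _ do rewrite mulr_suml.
by rewrite pair_bigA; apply: eq_bigr => -[i j] _ /=; ring.
Qed.

End PowerSums.

(** * Rational relations among roots of unity *)

Lemma prim_root_poly_eq0 n (z : algC) (p : {poly rat}) :
  n.-primitive_root z -> (size p <= totient n)%N -> root (map_poly ratr p) z -> p = 0.
Proof.
move=> z_prim size_p; have [p0 [min_p0 _] root_p0] := minCpolyP z.
rewrite root_p0 => p0_dvd; apply/eqP/negPn/negP => p_neq0.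
have size_p0 : size p0 = (totient n).+1.
  by rewrite -(size_cyclotomic z) -(minCpoly_cyclotomic z_prim) min_p0 size_map_poly.
by have := dvdp_leq p_neq0 p0_dvd; rewrite size_p0 ltnNge size_p.
Qed.

(* Subtracting c 0 times the relation 1 + z + ... + z^(n-1) = 0 leaves z times a rational
   polynomial of degree < n - 1 vanishing at z, below the degree of the minimal polynomial. *)
Lemma prim_root_sum_const n (z : algC) (c : 'Z_n -> rat) :
  prime n -> n.-primitive_root z ->
  \sum_(x : 'Z_n) ratr (c x) * z ^+ x = 0 -> forall x, c x = c 0.
Proof.
move=> n_prime z_prim sum_c0; have n_gt1 := prime_gt1 n_prime.
have lift0E (j : 'I_(Zp_trunc n).+1) : lift ord0 j = inZp j.+1 :> 'Z_n.
  by apply: val_inj; rewrite /= modn_small // ltnS.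
pose p := \poly_(j < (Zp_trunc n).+1) (c (inZp j.+1) - c 0).
have sum_z : \sum_(x : 'Z_n) z ^+ x = 0.
  transitivity (\sum_(k : 'Z_n) zpow z (1 * k)); first by apply: eq_bigr => k _; rewrite mul1r.
  by rewrite sum_zpow // oner_eq0.
have : z * (map_poly ratr p).[z] = 0.
  rewrite (@horner_coef_wide _ (Zp_trunc n).+1 (map_poly ratr p)); last first.
    by rewrite size_map_poly size_poly.
  transitivity (\sum_x ratr (c x) * z ^+ x - ratr (c 0) * \sum_(x : 'Z_n) z ^+ x).
    rewrite [in RHS]mulr_sumr -sumrB [in RHS]big_ord_recl subrr add0r mulr_sumr.
    apply: eq_bigr => j _.
    by rewrite coef_map coef_poly ltn_ord raddfB -lift0E /= exprS; ring.
  by rewrite sum_z mulr0 subr0.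
move=> /eqP; rewrite mulf_eq0 (prim_root_eq0 z_prim) eqn0Ngt prime_gt0 //= => p_root.
have p0 : p = 0.
  apply: prim_root_poly_eq0 z_prim _ p_root.
  by rewrite totient_prime // -(Zp_cast n_gt1) size_poly.
move=> x; case: (unliftP ord0 x) => [j ->|-> //].
have := congr1 (fun q : {poly rat} => q`_j) p0.
by rewrite coef0 coef_poly ltn_ord lift0E => /eqP; rewrite subr_eq0 => /eqP.
Qed.

Section RootOfUnity.
Variables (n : nat) (z : algC).
Hypotheses (n_prime : prime n) (z_prim : n.-primitive_root z).

Lemma count_diff_const (s1 s2 : seq 'Z_n) :
  \sum_x (count_mem x s1)%:R * z ^+ x = \sum_x (count_mem x s2)%:R * z ^+ x ->
  forall x, (count_mem x s1)%:R - (count_mem x s2)%:R =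
            (count_mem 0 s1)%:R - (count_mem 0 s2)%:R :> rat.
Proof.
move=> eq_sums; apply: prim_root_sum_const n_prime z_prim _.
under eq_bigr => x _ do rewrite rmorphB !rmorph_nat mulrBl.
by rewrite sumrB eq_sums subrr.
Qed.

Lemma perm_eq_of_root_sums (s1 s2 : seq 'Z_n) : size s1 = size s2 ->
  \sum_x (count_mem x s1)%:R * z ^+ x = \sum_x (count_mem x s2)%:R * z ^+ x ->
  perm_eq s1 s2.
Proof.
move=> eq_size /count_diff_const diff_const.
have size_count (s : seq 'Z_n) : \sum_x (count_mem x s)%:R = (size s)%:R :> rat.
  rewrite -sum1_size natr_sum [in RHS]sum_count_mem.
  by apply: eq_bigr => x _; rewrite -mulr_natl mulr1.
have : \sum_(x : 'Z_n) ((count_mem x s1)%:R - (count_mem x s2)%:R : rat) = 0.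
  by rewrite sumrB !size_count eq_size subrr.
rewrite (eq_bigr _ (fun x _ => diff_const x)) sumr_const card_ord => /eqP.
rewrite mulrn_eq0 /= => /eqP diff0.
apply/allP => x _; have := diff_const x; rewrite diff0 => /eqP.
by rewrite subr_eq0 eqr_nat.
Qed.

Lemma count_const_of_root_sum0 (s : seq 'Z_n) :
  \sum_x (count_mem x s)%:R * z ^+ x = 0 -> forall x, count_mem x s = count_mem 0 s.
Proof.
move=> sum0 x.
have eq_sums : \sum_(y : 'Z_n) (count_mem y s)%:R * z ^+ y =
                \sum_(y : 'Z_n) (count_mem y [::])%:R * z ^+ y.
  by rewrite sum0 big1 // => y _; rewrite mul0r.
by have /eqP := count_diff_const eq_sums x; rewrite !subr0 eqr_nat => /eqP.
Qed.

Lemma hat_indicator_neq0 (f : 'Z_n -> bool) y0 : f y0 != f 0 ->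
  forall k, hat z (fun y => (f y)%:R) k != 0.
Proof.
move=> nonconst k; have [->|k_neq0] := eqVneq k 0.
  rewrite /hat; under eq_bigr => y _ do rewrite mulr0 zpow0 mulr1.
  have [y fy] : exists y, f y.
    case f0: (f 0); first by exists 0.
    by exists y0; move: nonconst; rewrite f0; case: (f y0).
  by rewrite -natr_sum pnatr_eq0 (bigD1 y) //= fy.
apply: contra nonconst => /eqP hat0.
have zk_prim : n.-primitive_root (z ^+ k).
  by rewrite (prim_root_exp_coprime _ z_prim) coprime_sym coprime_Zp_prime.
have const := prim_root_sum_const (c := fun y => (f y)%:R) n_prime zk_prim.
have /eqP : (f y0)%:R = (f 0)%:R :> rat.
  apply: const; rewrite -[RHS]hat0; apply: eq_bigr => y _.
  by rewrite rmorph_nat (zpowM (prime_gt1 n_prime) z_prim) exprAC.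
by rewrite eqr_nat; case: (f y0); case: (f 0).
Qed.

End RootOfUnity.

(** * Reconstruction *)

Section TrivialStabiliser.
Variables (n : nat) (G : seq 'Z_n) (z : algC).
Hypotheses (n_prime : prime n) (n_gt2 : (2 < n)%N) (z_prim : n.-primitive_root z).
Hypothesis stab1 : forall v, perm_eq (mset_scale v G) G -> v = 1.

Let n_gt1 : (1 < n)%N := prime_gt1 n_prime.

Lemma G_neq_nil : G != [::].
Proof.
apply/eqP => G0; have := stab1 (v := 0); rewrite G0 => /(_ isT)/eqP.
by rewrite eq_sym oner_eq0.
Qed.

Lemma perm_mset_scale_inj a b : perm_eq (mset_scale a G) (mset_scale b G) -> a = b.
Proof.
wlog a_neq0 : a b / a != 0 => [wlog_a|].
  have [a0|] := eqVneq a 0; last exact: wlog_a.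
  have [->|b_neq0 ab] := eqVneq b 0; first by rewrite a0.
  by apply/esym/wlog_a; rewrite // perm_sym.
move=> ab; have a_unit := Zp_unit_prime n_prime a_neq0.
have /stab1 ab1 : perm_eq (mset_scale (a^-1 * b) G) G.
  by rewrite -(perm_mset_scale_unit _ _ a_unit) mset_scaleA mulVKr // perm_sym.
by rewrite -[b](mulVKr a_unit) ab1 mulr1.
Qed.

Lemma eigvalE k :
  eigval z G k = (size G)%:R^-1 * \sum_x (count_mem x (mset_scale (- k) G))%:R * z ^+ x.
Proof.
congr (_ * _); rewrite (eq_bigr _ (fun x _ => mulr_natl _ _)) -sum_count_mem big_map.
by apply: eq_bigr => g _; rewrite mulNr mulrC.
Qed.

Lemma eigval_inj : injective (eigval z G).
Proof.
have NG : (size G)%:R^-1 != 0 :> algC by rewrite invr_eq0 pnatr_eq0 size_eq0 G_neq_nil.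
move=> a b; rewrite !eigvalE => /(mulfI NG) eq_sums.
apply/oppr_inj/perm_mset_scale_inj/(perm_eq_of_root_sums n_prime z_prim) => //.
by rewrite !size_map.
Qed.

(* If eigval k = 0, the multiset -kG is uniform, hence fixed by the unit 2, forcing k = 0. *)
Lemma eigval_neq0 k : eigval z G k != 0.
Proof.
have [->|k_neq0] := eqVneq k 0.
  rewrite /eigval (eq_bigr (fun _ => 1)) => [|g _]; last by rewrite mulr0 oppr0 zpow0.
  have -> : \sum_(g <- G) (1 : algC) = (size G)%:R by rewrite -sum1_size natr_sum.
  by rewrite mulVf ?oner_eq0 // pnatr_eq0 size_eq0 G_neq_nil.
rewrite eigvalE mulf_eq0 invr_eq0 pnatr_eq0 size_eq0 (negbTE G_neq_nil) /=.
apply/eqP => /(count_const_of_root_sum0 n_prime z_prim) uniform.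
have two_unit : (2 : 'Z_n) \is a GRing.unit.
  by apply: Zp_unit_prime => //; rewrite Zp_natr_eq0 // gtnNdvd.
have := perm_mset_scale_uniform two_unit uniform; rewrite mset_scaleA.
move=> /perm_mset_scale_inj /(congr1 (fun y => y + k)).
by rewrite mulr_natl mulr2n addrNK addNr => /eqP; rewrite oppr_eq0 (negbTE k_neq0).
Qed.

Section SameLaw.
Variables (f1 f2 : 'Z_n -> bool).
Hypothesis law : same_label_law G f1 f2.
Let F1 y : algC := (f1 y)%:R.
Let F2 y : algC := (f2 y)%:R.
Let n_neq0 : n%:R != 0 :> algC.
Proof. by rewrite pnatr_eq0 -lt0n ltnW. Qed.

Lemma same_law_bispec j k : bispec z F1 j k = bispec z F2 j k.
Proof.
pose c p := (n%:R ^+ 2)^-1 * (bispec z F1 (p.1 - p.2) p.2 - bispec z F2 (p.1 - p.2) p.2).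
have /(_ (j + k, k)) : forall p, c p = 0.
  apply: (power_sums2_eq0 eigval_inj eigval_neq0) => s t.
  transitivity (triple_corr G F1 s t - triple_corr G F2 s t).
    rewrite !(triple_corr_fourier G n_gt1 z_prim n_neq0) -mulrBr -sumrB mulr_sumr.
    by apply: eq_bigr => p _; rewrite /c; ring.
  by rewrite (same_law_triple_corr _ _ law) subrr.
move=> /eqP; rewrite /c mulf_eq0 invr_eq0 expf_eq0 (negbTE n_neq0) andbF /= subr_eq0 addrK.
by move/eqP.
Qed.

(* hat F 0 is the nonnegative number of ones of the labeling, so its cube bispec F 0 0
   determines it. *)
Lemma same_law_hat0 : hat z F1 0 = hat z F2 0.
Proof.
have hat0_ge0 (f : 'Z_n -> bool) : 0 <= hat z (fun y => (f y)%:R) 0.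
  by apply: sumr_ge0 => y _; rewrite mulr0 zpow0 mulr1 ler0n.
have cube (x : algC) : x * x * x = x ^+ 3 by rewrite !exprS expr0 mulr1 mulrA.
have /eqP := same_law_bispec 0 0; rewrite /bispec addr0 oppr0 !cube.
by rewrite eqrXn2 ?hat0_ge0 // => /eqP.
Qed.

(* The quotient of the two Fourier transforms is a character of Z_n. *)
Lemma same_law_shift y0 : f1 y0 != f1 0 -> exists l, forall x, f1 x = f2 (x + l).
Proof.
move=> nonconst; have h1_neq0 := hat_indicator_neq0 n_prime z_prim nonconst.
have h2_neq0 k : hat z F2 k != 0.
  apply/eqP => h2k; have := same_law_bispec 0 k; rewrite /bispec h2k mulr0 mul0r.
  by apply/eqP; rewrite !mulf_neq0.
pose r k := hat z F1 k / hat z F2 k.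
have r_neq0 k : r k != 0 by rewrite mulf_neq0 ?invr_eq0.
have rB j k : r j * r k * r (- (j + k)) = 1.
  transitivity (bispec z F1 j k / bispec z F2 j k); first by rewrite /r /bispec !invfM; ring.
  by rewrite same_law_bispec divff // !mulf_neq0.
have r0 : r 0 = 1 by rewrite /r same_law_hat0 divff.
have rD j k : r (j + k) = r j * r k.
  apply: (mulIf (r_neq0 (- (j + k)))); rewrite rB.
  by have := rB 0 (j + k); rewrite r0 mul1r add0r.
have [l rl] := Zp_character_zpow n_gt1 z_prim r0 rD.
have hat_shift k : hat z F1 k = zpow z (l * k) * hat z F2 k by rewrite -rl divfK.
exists (- l) => x; apply/eqP.
have /eqP := fourier_shift n_gt1 z_prim n_neq0 hat_shift x.
by rewrite eqr_nat; case: (f1 x); case: (f2 _).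
Qed.
End SameLaw.

End TrivialStabiliser.

Lemma label_prob_const n (G : seq 'Z_n) f c b :
  (forall x, f x = c) -> label_prob G f [:: b] = (c == b)%:R.
Proof.
move=> f_const; rewrite /=; under eq_bigr => x _ do rewrite f_const mulr1.
by rewrite sumr_const -mulrnAl !card_ord -mulr_natr mulVf ?mul1r // pnatr_eq0.
Qed.

(* A constant labeling is determined by the one-point law; if only f2 is nonconstant, the
   roles of f1 and f2 are swapped. *)
Lemma reconstructive_of_trivial_stab n (G : seq 'Z_n) :
  prime n -> (2 < n)%N -> (forall v, perm_eq (mset_scale v G) G -> v = 1) -> reconstructive G.
Proof.
move=> n_prime n_gt2 stab1 f1 f2 law.
have [z z_prim] := C_prim_root_exists (prime_gt0 n_prime).
have shift := same_law_shift n_prime n_gt2 z_prim stab1.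
case: (pickP (fun y => f1 y != f1 0)) => [y0 /(shift _ _ law) //|/= f1_const].
have {}f1_const x : f1 x = f1 0 by apply/eqP; rewrite -[_ == _]negbK f1_const.
case: (pickP (fun y => f2 y != f2 0)) => [y0 /(shift _ _ (fun w => esym (law w)))|/= f2_const].
  by move=> [l f2l]; exists 0 => k; rewrite f2l !f1_const.
have {}f2_const x : f2 x = f2 0 by apply/eqP; rewrite -[_ == _]negbK f2_const.
exists 0 => k; rewrite f1_const f2_const; apply/eqP.
have := law [:: f1 0]; rewrite (label_prob_const _ _ f1_const) (label_prob_const _ _ f2_const).
by rewrite eqxx (eq_sym (f2 0)); case: eqP => // _ /eqP; rewrite oner_eq0.
Qed.

Lemma symmetric_step_of_perm n (G : seq 'Z_n) :
  perm_eq (mset_scale (-1) G) G -> symmetric_step G.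
Proof.
move=> /permP sym k; rewrite /gamma; congr (_%:R / _).
rewrite -(sym (pred1 (- k))) /mset_scale count_map; apply: eq_count => x /=.
by rewrite mulN1r eqr_oppLR opprK.
Qed.

Lemma scale_stabiliser_trivial n (G : seq 'Z_n) :
  (3 < n)%N -> (forall v, perm_eq (mset_scale v G) G -> [|| v == -1, v == 0 | v == 1]) ->
  ~~ perm_eq (mset_scale (-1) G) G -> forall v, perm_eq (mset_scale v G) G -> v = 1.
Proof.
move=> n_gt3 stab nsym v stab_v; have n_gt1 : (1 < n)%N by apply: leq_ltn_trans n_gt3.
case/or3P: (stab v stab_v) => /eqP v_eq //; first by rewrite -v_eq stab_v in nsym.
have G_zero g : g \in G -> g = 0.
  by rewrite -(perm_mem stab_v) v_eq => /mapP[x _ ->]; rewrite mul0r.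
have stab2 : perm_eq (mset_scale 2 G) G.
  suff -> : mset_scale 2 G = G by [].
  by rewrite -[RHS]map_id; apply/eq_in_map => g /G_zero ->; rewrite mulr0.
move/stab: stab2; rewrite -subr_eq0 opprK natr1 !Zp_natr_eq0 // !gtnNdvd ?(ltnW n_gt3) //=.
by rewrite mulr2n -subr_eq0 addrK oner_eq0.
Qed.

Theorem lemma4 (n : nat) (G : seq 'Z_n) :
  prime n -> (5 < n)%N ->
  (forall v : 'Z_n, perm_eq (mset_scale v G) G ->
     [|| v == -1, v == 0 | v == 1]) ->
  symmetric_step G \/ reconstructive G.
Proof.
move=> n_prime n_gt5 stab; have n_gt3 : (3 < n)%N := ltnW (ltnW n_gt5).
have [sym|nsym] := boolP (perm_eq (mset_scale (-1) G) G).
  by left; apply: symmetric_step_of_perm.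
right; apply: reconstructive_of_trivial_stab => //; first exact: ltnW.
exact: scale_stabiliser_trivial nsym.
Qed.
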